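(* Let $M>0$, $D\in\mathbb{N}$, $l=2D$, and $c\in\mathbb{R}^D$ with $\|c\|_\infty\le M/2$. Let $H\in\mathbb{R}^{5\times l}$ be the structured embedding matrix whose first row is $(x^1,\dots,x^D,0,\dots,0)$ and second row is zero, with $\|H\|_\infty\le M/2$. Then there is a transformer block $\mathrm{B}$ with $D$ attention heads and a feed-forward layer of depth $3$, with all parameters bounded in absolute value by $O(lM)$, such that $\mathrm{B}(H)$ is the structured embedding matrix whose first row is $(x^1,\dots,x^D,x^1-c^1,\dots,x^D-c^D)$ and whose second row is zero (rows $3$–$5$ unchanged).
   Context: $\sigma(x)=\max(0,x)$. An attention head with $Q,K,V\in\mathbb{R}^{5\times5}$ maps $H=[h_1,\dots,h_l]$ to the matrix whose $i$-th column is $\sum_{k=1}^l\sigma(\langle Qh_i,Kh_k\rangle)Vh_k$; a multi-head attention layer $\mathrm{MHA}$ is a sum of attention heads; a feed-forward layer of depth $L$ is $h\mapsto W_L\sigma(\cdots\sigma(W_1h+b_1)\cdots)+b_L$ applied column-wise; a transformer block is $\mathrm{B}(H)=\mathrm{FFN}(\mathrm{MHA}(H)+H)+\mathrm{MHA}(H)+H$. A structured embedding matrix $H\in\mathbb{R}^{5\times l}$ has $t$-th column with entries $(h_t^3,h_t^4)=\mathcal{I}_t=(\cos(\tfrac{t}{l}\tfrac{\pi}{2}),\sin(\tfrac{t}{l}\tfrac{\pi}{2}))$ and $h_t^5=1$. $\|H\|_\infty$ is the maximal absolute entry. *)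

From HB Require Import structures.
From mathcomp Require Import all_boot all_order all_algebra.
From mathcomp Require Import all_classical all_reals all_analysis.
Set Implicit Arguments. Unset Strict Implicit. Unset Printing Implicit Defensive.
Import Order.TTheory GRing.Theory Num.Theory.
Local Open Scope ring_scope.

Section Transformer.
Variable R : realType.

Definition relu (x : R) : R := Num.max 0 x.

Definition attn_head (l : nat) (Q K V : 'M[R]_5) (H : 'M[R]_(5, l)) : 'M[R]_(5, l) :=
  \matrix_(r < 5, i < l)
    \sum_(k < l)
      relu (\sum_(j < 5) (Q *m H) j i * (K *m H) j k) * (V *m H) r k.

Definition mha (nh l : nat) (Qs Ks Vs : 'I_nh -> 'M[R]_5) (H : 'M[R]_(5, l))
  : 'M[R]_(5, l) :=
  \sum_(m < nh) attn_head (Qs m) (Ks m) (Vs m) H.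

Definition ffn3 (n1 n2 l : nat)
  (W1 : 'M[R]_(n1, 5)) (b1 : 'cV[R]_n1)
  (W2 : 'M[R]_(n2, n1)) (b2 : 'cV[R]_n2)
  (W3 : 'M[R]_(5, n2)) (b3 : 'cV[R]_5) (H : 'M[R]_(5, l)) : 'M[R]_(5, l) :=
  \matrix_(r < 5, i < l)
    (W3 *m map_mx relu (W2 *m map_mx relu (W1 *m col i H + b1) + b2) + b3) r 0.

Definition tblock (nh n1 n2 l : nat) (Qs Ks Vs : 'I_nh -> 'M[R]_5)
  (W1 : 'M[R]_(n1, 5)) (b1 : 'cV[R]_n1)
  (W2 : 'M[R]_(n2, n1)) (b2 : 'cV[R]_n2)
  (W3 : 'M[R]_(5, n2)) (b3 : 'cV[R]_5) (H : 'M[R]_(5, l)) : 'M[R]_(5, l) :=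
  let A := mha Qs Ks Vs H + H in
  ffn3 W1 b1 W2 b2 W3 b3 A + A.

(* Structured embedding matrix with given first and second rows:
   column t (t = 1..l, i.e. index i = t-1) has rows 3,4 equal to
   (cos(t/l * pi/2), sin(t/l * pi/2)) and row 5 equal to 1. *)
Definition struct_embed (l : nat) (r1 r2 : 'rV[R]_l) : 'M[R]_(5, l) :=
  \matrix_(r < 5, i < l)
    let th := ((i.+1)%:R / l%:R) * (pi / 2) in
    if r == 0 :> nat then r1 0 i
    else if r == 1 :> nat then r2 0 i
    else if r == 2 :> nat then cos th
    else if r == 3 :> nat then sin th
    else 1.

Definition mx_abs_le (m n : nat) (A : 'M[R]_(m, n)) (b : R) : Prop :=
  forall i j, `|A i j| <= b.

End Transformer.

From HB Require Import structures.
From mathcomp Require Import all_boot all_order all_algebra.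
From mathcomp Require Import all_classical all_reals all_analysis.
From mathcomp Require Import ring lra.
Set Implicit Arguments. Unset Strict Implicit. Unset Printing Implicit Defensive.
Import Order.TTheory GRing.Theory Num.Theory.
Local Open Scope ring_scope.

(* Column t of the embedding carries the unit vector at angle θ_t = (t/l)(π/2); neighbouring
   angles differ by δ = π/(2l), so cos(θ_i - θ_k) <= cos δ < 1 whenever i <> k.  Head m uses the
   ReLU score (cos(θ_{D+m} - θ_i) - cos δ) + (cos(θ_m - θ_k) - 1), which is nonzero only for query
   column i = D+m and key column k = m, where it is 1 - cos δ > 0; its value matrix writes
   (1 - cos δ)(x_m - c_m) into the second row of column D+m.  The feed-forward layer moves the
   second row into the first, rescaled by 1/(1 - cos δ), and clears the second row.  This factor
   is of order l^2, so to keep all weights bounded by 1 it is realised as the width N > 1/(1 - cos δ)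
   of a hidden layer of copies, followed by the weight 1/(N(1 - cos δ)) <= 1. *)

Section Trigonometry.
Variable R : realType.

Definition embed_angle (l t : nat) : R := t.+1%:R / l%:R * (pi / 2).
Definition angle_step (l : nat) : R := pi / 2 / l%:R.
Definition score_gap (l : nat) : R := 1 - cos (angle_step l).

Lemma ler_cos : {in `[0, pi] &, {mono (@cos R) : x y /~ y <= x}}.
Proof. by move=> x y xI yI; rewrite !leNgt ltr_cos. Qed.

Lemma embed_angleB l a b : (b <= a)%N ->
  embed_angle l a - embed_angle l b = (a - b)%:R * angle_step l.
Proof. by move=> ba; rewrite /embed_angle /angle_step natrB // -!natr1; ring. Qed.

Lemma angle_step_gt0 l : (0 < l)%N -> 0 < angle_step l.
Proof. by move=> l0; rewrite !divr_gt0 ?pi_gt0 ?ltr0n. Qed.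

Lemma mul_angle_step l : (0 < l)%N -> l%:R * angle_step l = pi / 2.
Proof. by move=> l0; rewrite /angle_step mulrC divfK // pnatr_eq0 -lt0n. Qed.

Lemma angle_step_le_pihalf l : (0 < l)%N -> angle_step l <= pi / 2.
Proof.
by move=> l0; rewrite -(mul_angle_step l0) ler_peMl ?ler1n // ltW // angle_step_gt0.
Qed.

Lemma cos_embed_angleB_le l a b : (a < l)%N -> (b < l)%N -> a != b ->
  cos (embed_angle l a - embed_angle l b) <= cos (angle_step l).
Proof.
wlog ba : a b / (b < a)%N => [W al bl nab|al _ _].
  case: (ltngtP b a) => [ba|ab|ab]; first exact: W.
  - by rewrite -cosN opprB W // eq_sym.
  - by rewrite ab eqxx in nab.
have l0 : (0 < l)%N by apply: leq_ltn_trans al.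
have d0 := angle_step_gt0 l0; have dpi := angle_step_le_pihalf l0.
have pi0 := pi_gt0 R.
have k1 : 1 <= (a - b)%:R :> R by rewrite ler1n subn_gt0.
have kl : (a - b)%:R <= l%:R :> R.
  by rewrite ler_nat (leq_trans (leq_subr _ _) (ltnW al)).
have kd : (a - b)%:R * angle_step l <= pi / 2.
  by rewrite -(mul_angle_step l0) ler_wpM2r // ltW.
rewrite embed_angleB 1?ltnW // ler_cos ?in_itv /=.
- by rewrite -[leLHS]mul1r ler_wpM2r // ltW.
- by apply/andP; split; lra.
- by apply/andP; split; [apply: mulr_ge0; lra | lra].
Qed.

Lemma score_gap_gt0 l : (0 < l)%N -> 0 < score_gap l.
Proof.
move=> l0; have d0 := angle_step_gt0 l0; have dpi := angle_step_le_pihalf l0.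
have pi0 := pi_gt0 R.
rewrite subr_gt0 -[ltRHS]cos0 ltr_cos // ?in_itv /=; apply/andP; split; lra.
Qed.

End Trigonometry.

Section ReLU.
Variable R : realType.

Lemma relu_id (y : R) : 0 <= y -> relu y = y.
Proof. by move=> y0; apply/max_idPr. Qed.

Lemma relu_eq0 (y : R) : y <= 0 -> relu y = 0.
Proof. by move=> y0; apply/max_idPl. Qed.

Lemma relu_ge0 (y : R) : 0 <= relu y.
Proof. by rewrite /relu le_max lexx. Qed.

Lemma relu_subN (y : R) : relu y - relu (- y) = y.
Proof.
have [y0|y0] := leP 0 y.
  by rewrite relu_id // relu_eq0 ?subr0 // oppr_le0.
by rewrite relu_eq0 ?relu_id ?sub0r ?opprK // ?oppr_ge0 ltW.
Qed.

End ReLU.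

Section Attention.
Variable R : realType.

Lemma attn_head_onehot l (Q K V : 'M[R]_5) (H : 'M[R]_(5, l)) (T m : 'I_l) g :
  (forall i k, relu (\sum_(j < 5) (Q *m H) j i * (K *m H) j k)
               = if (i == T) && (k == m) then g else 0) ->
  attn_head Q K V H = \matrix_(r, i) if i == T then g * (V *m H) r m else 0.
Proof.
move=> score; apply/matrixP => r i; rewrite !mxE.
under eq_bigr => k _ do rewrite score.
rewrite (bigD1 m) //= eqxx andbT big1 ?addr0 => [|k /negbTE->]; last first.
  by rewrite andbF mul0r.
by case: eqP; rewrite ?mul0r // mxE.
Qed.

Definition query_mx (l T : nat) : 'M[R]_5 := \matrix_(j, q)
  if j == 0 :> nat then
    (if q == 2 :> nat then cos (embed_angle R l T)
     else if q == 3 :> nat then sin (embed_angle R l T)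
     else if q == 4 :> nat then - cos (angle_step R l) else 0)
  else if j == 1 :> nat then (if q == 4 :> nat then 1 else 0) else 0.

Definition key_mx (l m : nat) : 'M[R]_5 := \matrix_(j, q)
  if j == 0 :> nat then (if q == 4 :> nat then 1 else 0)
  else if j == 1 :> nat then
    (if q == 2 :> nat then cos (embed_angle R l m)
     else if q == 3 :> nat then sin (embed_angle R l m)
     else if q == 4 :> nat then -1 else 0)
  else 0.

Definition value_mx (a : R) : 'M[R]_5 := \matrix_(j, q)
  if j == 1 :> nat then (if q == 0 :> nat then 1 else if q == 4 :> nat then - a else 0)
  else 0.

Lemma mul_query_embed l T (r1 r2 : 'rV[R]_l) :
  query_mx l T *m struct_embed r1 r2 = \matrix_(j, i)
    if j == 0 :> nat then cos (embed_angle R l T - embed_angle R l i) - cos (angle_step R l)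
    else if j == 1 :> nat then 1 else 0.
Proof.
apply/matrixP => j i; rewrite !mxE !big_ord_recl big_ord0 !mxE /=.
by case: j => [[|[|[|[|[|?]]]]] ?] /=; rewrite ?cosB; ring.
Qed.

Lemma mul_key_embed l m (r1 r2 : 'rV[R]_l) :
  key_mx l m *m struct_embed r1 r2 = \matrix_(j, k)
    if j == 0 :> nat then 1
    else if j == 1 :> nat then cos (embed_angle R l m - embed_angle R l k) - 1 else 0.
Proof.
apply/matrixP => j k; rewrite !mxE !big_ord_recl big_ord0 !mxE /=.
by case: j => [[|[|[|[|[|?]]]]] ?] /=; rewrite ?cosB; ring.
Qed.

Lemma mul_value_embed l a (r1 r2 : 'rV[R]_l) :
  value_mx a *m struct_embed r1 r2 = \matrix_(j, k) if j == 1 :> nat then r1 0 k - a else 0.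
Proof.
apply/matrixP => j k; rewrite !mxE !big_ord_recl big_ord0 !mxE /=.
by case: j => [[|[|[|[|[|?]]]]] ?] /=; ring.
Qed.

(* Each bracket is <= 0, and equals 0 exactly at i = T, resp. k = m. *)
Lemma relu_query_key_score l (T m i k : 'I_l) (r1 r2 : 'rV[R]_l) :
  relu (\sum_(j < 5) (query_mx l T *m struct_embed r1 r2) j i
                     * (key_mx l m *m struct_embed r1 r2) j k)
  = if (i == T) && (k == m) then score_gap R l else 0.
Proof.
rewrite mul_query_embed mul_key_embed !big_ord_recl big_ord0 !mxE /=.
rewrite !mul0r !mulr1 !mul1r !addr0.
have l0 : (0 < l)%N by apply: leq_ltn_trans (ltn_ord T).
have gap1 := score_gap_gt0 R l0; rewrite /score_gap in gap1.
have cT := cos_le1 (embed_angle R l T - embed_angle R l i).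
have cm := cos_le1 (embed_angle R l m - embed_angle R l k).
have gT : i != T -> cos (embed_angle R l T - embed_angle R l i) <= cos (angle_step R l).
  by move=> iT; apply: cos_embed_angleB_le; rewrite // eq_sym.
have gm : k != m -> cos (embed_angle R l m - embed_angle R l k) <= cos (angle_step R l).
  by move=> km; apply: cos_embed_angleB_le; rewrite // eq_sym.
case: (eqVneq i T) => [->|iT]; case: (eqVneq k m) => [->|km] /=;
  rewrite ?subrr ?cos0.
- by rewrite relu_id /score_gap; lra.
- by rewrite relu_eq0 //; have := gm km; lra.
- by rewrite relu_eq0 //; have := gT iT; lra.
- by rewrite relu_eq0 //; have := gT iT; have := gm km; lra.
Qed.

End Attention.

Section CopyHeads.
Variables (R : realType) (D : nat) (x c : 'rV[R]_D).

Definition copy_queries (m : 'I_D) := query_mx R (D + D) (rshift D m).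
Definition copy_keys (m : 'I_D) := key_mx R (D + D) (lshift D m).
Definition copy_values (m : 'I_D) := value_mx (c 0 m).

Lemma mha_copy_heads :
  mha copy_queries copy_keys copy_values (struct_embed (row_mx x 0) 0)
  = \matrix_(r, i) if r == 1 :> nat then score_gap R (D + D) * row_mx 0 (x - c) 0 i else 0.
Proof.
apply/matrixP => r i; rewrite /mha summxE [RHS]mxE.
under eq_bigr => m _ do rewrite (attn_head_onehot _
  (fun i k => relu_query_key_score (rshift D m) (lshift D m) i k _ _))
  mxE mul_value_embed mxE row_mxEl.
case: (split_ordP i) => j ->.
  rewrite big1 => [|m _]; last by rewrite eq_shift.
  by rewrite row_mxEl mxE; case: ifP; rewrite ?mulr0.
rewrite (bigD1 j) //= eqxx big1 ?addr0 => [|m mj]; last first.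
  by rewrite eq_shift eq_sym (negbTE mj).
by rewrite row_mxEr !mxE; case: ifP; rewrite ?mulr0.
Qed.

End CopyHeads.

Section Amplifier.
Variables (R : realType) (N : nat).

Definition amp_W1 : 'M[R]_(N + N, 5) := \matrix_(p, q)
  if q == 1 :> nat then (if (p < N)%N then 1 else -1) else 0.

Definition amp_W2 : 'M[R]_(2, N + N) := \matrix_(p, q)
  if (p == 0 :> nat) == (q < N)%N then 1 else 0.

Definition amp_W3 (w : R) : 'M[R]_(5, 2) := \matrix_(r, p)
  if r == 0 :> nat then (if p == 0 :> nat then w else - w)
  else if r == 1 :> nat then (if p == 0 :> nat then - N%:R^-1 else N%:R^-1) else 0.

Lemma amp_layer1 (v : 'cV[R]_5) p :
  (amp_W1 *m v) p 0 = if (p < N)%N then v 1 0 else - v 1 0.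
Proof.
rewrite !mxE !big_ord_recl big_ord0 !mxE /= !mul0r !add0r !addr0.
have -> : lift ord0 ord0 = 1 :> 'I_5 by exact: val_inj.
by case: ifP; rewrite ?mul1r ?mulN1r.
Qed.

Lemma amp_layer2 (v : 'cV[R]_5) p :
  (amp_W2 *m map_mx (@relu R) (amp_W1 *m v)) p 0
  = N%:R * relu (if p == 0 :> nat then v 1 0 else - v 1 0).
Proof.
rewrite mxE big_split_ord /=.
under eq_bigr => q _ do rewrite mxE mxE amp_layer1 /= ltn_ord.
under [X in _ + X]eq_bigr => q _ do rewrite mxE mxE amp_layer1 /= ltnNge leq_addr.
rewrite !sumr_const !card_ord.
by case: (p == 0 :> nat); rewrite /= ?mul1r ?mul0r mul0rn ?add0r ?addr0 mulr_natl.
Qed.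

Lemma amp_layer3 w (v : 'cV[R]_5) r : (0 < N)%N ->
  (amp_W3 w *m map_mx (@relu R) (amp_W2 *m map_mx (@relu R) (amp_W1 *m v))) r 0
  = if r == 0 :> nat then w * N%:R * v 1 0 else if r == 1 :> nat then - v 1 0 else 0.
Proof.
move=> N0; rewrite mxE !big_ord_recl big_ord0 addr0.
rewrite [X in _ * X + _]mxE [X in _ + _ * X]mxE !amp_layer2 /=.
rewrite !(relu_id (mulr_ge0 (ler0n _ _) (relu_ge0 _))) !mxE.
have := relu_subN (v 1 0).
case: r => [[|[|?]] ?] /= sub_eq; last by rewrite !mul0r addr0.
- by rewrite -[in RHS]sub_eq; ring.
- by rewrite -[in RHS]sub_eq; field; rewrite pnatr_eq0 -lt0n.
Qed.

Lemma ffn3_amp w l (A : 'M[R]_(5, l)) : (0 < N)%N ->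
  ffn3 amp_W1 0 amp_W2 0 (amp_W3 w) 0 A = \matrix_(r, i)
    if r == 0 :> nat then w * N%:R * A 1 i else if r == 1 :> nat then - A 1 i else 0.
Proof.
by move=> N0; apply/matrixP => r i; rewrite mxE !addr0 amp_layer3 // !mxE.
Qed.

End Amplifier.

Section Block.
Variables (R : realType) (D : nat) (x c : 'rV[R]_D).

Lemma tblock_copy_amp N w : (0 < N)%N -> w * N%:R * score_gap R (D + D) = 1 ->
  tblock (@copy_queries R D) (@copy_keys R D) (copy_values c)
    (amp_W1 R N) 0 (amp_W2 R N) 0 (amp_W3 N w) 0 (struct_embed (row_mx x 0) 0)
  = struct_embed (row_mx x (x - c)) 0.
Proof.
move=> N0 wNg; rewrite /tblock /= ffn3_amp // mha_copy_heads.
have -> : row_mx x (x - c) = row_mx x 0 + row_mx 0 (x - c).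
  by rewrite add_row_mx addr0 add0r.
move: (row_mx x 0) (row_mx 0 (x - c)) => z y.
apply/matrixP => r i; rewrite !mxE.
case: r => [[|[|[|[|[|?]]]]] ?] //=; rewrite ?add0r ?addr0 ?addNr //.
by rewrite mulrA wNg mul1r addrC.
Qed.

End Block.

Section Bounds.
Variable R : realType.

Lemma mx_abs_leW m n (A : 'M[R]_(m, n)) a b : mx_abs_le A a -> a <= b -> mx_abs_le A b.
Proof. by move=> Aa ab i j; apply: le_trans (Aa i j) ab. Qed.

Lemma mx_abs_le0 m n (b : R) : 0 <= b -> mx_abs_le (0 : 'M[R]_(m, n)) b.
Proof. by move=> b0 i j; rewrite mxE normr0. Qed.

Lemma mx_abs_le_query l T : mx_abs_le (query_mx R l T) 1.
Proof.
move=> j q; rewrite mxE; repeat case: ifP => _;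
  by rewrite ?normrN ?normr0 ?normr1 ?cos_max ?sin_max.
Qed.

Lemma mx_abs_le_key l m : mx_abs_le (key_mx R l m) 1.
Proof.
move=> j q; rewrite mxE; repeat case: ifP => _;
  by rewrite ?normrN ?normr0 ?normr1 ?cos_max ?sin_max.
Qed.

Lemma mx_abs_le_value (a b : R) : 1 <= b -> `|a| <= b -> mx_abs_le (value_mx a) b.
Proof.
move=> b1 ab j q; rewrite mxE; repeat case: ifP => _;
  by rewrite ?normrN ?normr0 ?normr1 // (le_trans ler01).
Qed.

Lemma mx_abs_le_amp_W1 N : mx_abs_le (amp_W1 R N) 1.
Proof.
by move=> p q; rewrite mxE; repeat case: ifP => _; rewrite ?normrN ?normr0 ?normr1.
Qed.

Lemma mx_abs_le_amp_W2 N : mx_abs_le (amp_W2 R N) 1.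
Proof. by move=> p q; rewrite mxE; repeat case: ifP => _; rewrite ?normr0 ?normr1. Qed.

Lemma mx_abs_le_amp_W3 N (w : R) : (0 < N)%N -> `|w| <= 1 -> mx_abs_le (amp_W3 N w) 1.
Proof.
move=> N0 w1 r p; rewrite mxE; repeat case: ifP => _; rewrite ?normrN ?normr0 //.
all: by rewrite normfV normr_nat invf_le1 ?ler1n ?ltr0n.
Qed.

End Bounds.

Lemma exists_amp_weight (R : realType) (g : R) : 0 < g ->
  exists N w, [/\ (0 < N)%N, `|w| <= 1 & w * N%:R * g = 1].
Proof.
move=> g0; set N := (Num.truncn g^-1).+1.
have /andP[_ gN] : (Num.truncn g^-1)%:R <= g^-1 < N%:R.
  by rewrite truncn_itv // invr_ge0 ltW.
have Ng1 : 1 <= N%:R * g by rewrite -ler_pdivrMr // div1r ltW.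
exists N, (N%:R * g)^-1; split => //.
- by rewrite ger0_norm ?invr_ge0 ?invf_le1 //; lra.
- by rewrite -mulrA mulVf // gt_eqF //; lra.
Qed.

Theorem lemma5 (R : realType) :
  exists C : R, 0 < C /\
  forall (M : R) (D : nat) (c x : 'rV[R]_D),
    0 < M ->
    mx_abs_le c (M / 2) ->
    mx_abs_le (struct_embed (row_mx x (0 : 'rV[R]_D)) 0) (M / 2) ->
    exists (n1 n2 : nat) (Qs Ks Vs : 'I_D -> 'M[R]_5)
           (W1 : 'M[R]_(n1, 5)) (b1 : 'cV[R]_n1)
           (W2 : 'M[R]_(n2, n1)) (b2 : 'cV[R]_n2)
           (W3 : 'M[R]_(5, n2)) (b3 : 'cV[R]_5),
      let bnd := C * (D + D)%:R * M in
      (forall m, mx_abs_le (Qs m) bnd /\ mx_abs_le (Ks m) bnd /\ mx_abs_le (Vs m) bnd) /\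
      mx_abs_le W1 bnd /\ mx_abs_le b1 bnd /\
      mx_abs_le W2 bnd /\ mx_abs_le b2 bnd /\
      mx_abs_le W3 bnd /\ mx_abs_le b3 bnd /\
      tblock Qs Ks Vs W1 b1 W2 b2 W3 b3 (struct_embed (row_mx x (0 : 'rV[R]_D)) 0)
      = struct_embed (row_mx x (x - c)) 0.
Proof.
exists 1; split => // M [|D] c x M0 cM HM.
  exists 0%N, 0%N, (fun _ => 0), (fun _ => 0), (fun _ => 0), 0, 0, 0, 0, 0, 0 => bnd.
  have Z m n : mx_abs_le (0 : 'M[R]_(m, n)) bnd.
    by apply: mx_abs_le0; rewrite /bnd mulr0 mul0r.
  split; first by case.
  by do ![split; first exact: Z]; apply/matrixP => ? [].
have M2 : 1 <= M / 2 by have := HM 4 0; rewrite mxE /= normr1.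
have [N [w [N0 w1 wNg]]] := exists_amp_weight (score_gap_gt0 R (isT : (0 < D.+1 + D.+1)%N)).
exists (N + N)%N, 2%N, (@copy_queries R D.+1), (@copy_keys R D.+1), (copy_values c),
  (amp_W1 R N), 0, (amp_W2 R N), 0, (amp_W3 N w), 0 => bnd.
have l2 : 2 <= (D.+1 + D.+1)%:R :> R by rewrite ler_nat addSn ltnS addnS.
have bnd1 : 1 <= bnd by rewrite /bnd mul1r; nra.
have bndM : M / 2 <= bnd by rewrite /bnd mul1r; nra.
have Z m n : mx_abs_le (0 : 'M[R]_(m, n)) bnd by apply: mx_abs_le0; lra.
split.
  move=> m; split; [|split].
  - by apply: mx_abs_leW bnd1; apply: mx_abs_le_query.
  - by apply: mx_abs_leW bnd1; apply: mx_abs_le_key.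
  - exact: mx_abs_le_value bnd1 (le_trans (cM _ _) bndM).
split; first by apply: mx_abs_leW bnd1; apply: mx_abs_le_amp_W1.
split; first exact: Z.
split; first by apply: mx_abs_leW bnd1; apply: mx_abs_le_amp_W2.
split; first exact: Z.
split; first by apply: mx_abs_leW bnd1; apply: mx_abs_le_amp_W3 N0 w1.
by split; [exact: Z | exact: tblock_copy_amp].
Qed.
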